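(* Let $1<w\le 2$, $h>1$, $k\ge 2$, and let $\frac12\le y_1<\dots<y_n\le h-\frac12$ be uniformly spaced with $y_{i+1}-y_i=\frac1k$ for all $i$. Let $(\mathbf x,\prec)$ be a $\frac1k$-reasonable layout of this instance, and let $W=[a,b]\subseteq[\frac12,h-\frac12]$ and $W'=[a-\frac1k,b+\frac1k]$. Then the number of bad squares $s_i$ with $y_i\in W$ is at most three times the number of standard bad squares $s_i$ with $y_i\in W'$.
   Context: The instance is the strip $T=[0,w]\times[0,h]$ with the given $y_i$. A layout is a pair $(\mathbf x,\prec)$ where $\mathbf x=(x_1,\dots,x_n)$ with $x_i\in[\frac12,w-\frac12]$, and $\prec$ is a total order on the squares $s_1,\dots,s_n$, where $s_i$ is the closed axis-parallel unit square with centre $(x_i,y_i)$. If $s_i\prec s_j$ we say $s_j$ is in front of $s_i$ and $s_i$ is behind $s_j$. A point $p$ on the boundary of $s_i$ is visible if every square $s_j$ ($j\neq i$) containing $p$ is behind $s_i$, and covered otherwise. The visible perimeter of $s_i$ is the total length of its visible boundary points; the gap of $s_i$ is its visible perimeter minus $2$, the gap of a layout is the minimum gap of its squares, and a layout is $\varepsilon$-reasonable if its gap is larger than $\varepsilon$. A bad square is a square with at least two of its four corners covered; a standard bad square is a bad square one of whose vertical sides is entirely covered. *)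

From HB Require Import structures.
From mathcomp Require Import all_boot all_order all_algebra perm.
From mathcomp Require Import all_classical all_reals.
From mathcomp Require Import ereal measure lebesgue_measure.
Set Implicit Arguments. Unset Strict Implicit. Unset Printing Implicit Defensive.
Import Order.TTheory GRing.Theory Num.Theory.
Local Open Scope ring_scope.
Local Open Scope classical_set_scope.

Section Layouts.
Variables (R : realType) (n : nat).

(* A layout: centres (x i, y i) of the closed axis-parallel unit squares s_i,
   and a total order on the squares given by a ranking permutation:
   s_i ≺ s_j  iff  ord i < ord j. *)

Definition in_square (x y : 'I_n -> R) (j : 'I_n) (p : R * R) : Prop :=
  `|p.1 - x j| <= 1/2 /\ `|p.2 - y j| <= 1/2.

Definition visible (x y : 'I_n -> R) (ord : {perm 'I_n}) (i : 'I_n)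
    (p : R * R) : Prop :=
  forall j : 'I_n, j != i -> in_square x y j p -> (ord j < ord i)%N.

Definition covered (x y : 'I_n -> R) (ord : {perm 'I_n}) (i : 'I_n)
    (p : R * R) : Prop := ~ visible x y ord i p.

Definition visible_part (x y : 'I_n -> R) (ord : {perm 'I_n}) (i : 'I_n)
    (c : R) (side : R -> R * R) : set R :=
  [set t : R | c - 1/2 <= t <= c + 1/2 /\ visible x y ord i (side t)].

Definition visible_perimeter (x y : 'I_n -> R) (ord : {perm 'I_n})
    (i : 'I_n) : \bar R :=
  (lebesgue_measure (visible_part x y ord i (x i) (fun t => (t, y i - 1/2)%R))
 + lebesgue_measure (visible_part x y ord i (x i) (fun t => (t, y i + 1/2)%R))
 + lebesgue_measure (visible_part x y ord i (y i) (fun t => (x i - 1/2, t)%R))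
 + lebesgue_measure (visible_part x y ord i (y i) (fun t => (x i + 1/2, t)%R)))%E.

Definition gap (x y : 'I_n -> R) (ord : {perm 'I_n}) (i : 'I_n) : \bar R :=
  (visible_perimeter x y ord i - 2%:E)%E.

(* layout gap = min of square gaps; eps-reasonable iff it is > eps,
   i.e. every square has gap > eps (finitely many squares) *)
Definition reasonable (eps : R) (x y : 'I_n -> R) (ord : {perm 'I_n}) : Prop :=
  forall i : 'I_n, (eps%:E < gap x y ord i)%E.

Definition covered_corners (x y : 'I_n -> R) (ord : {perm 'I_n}) (i : 'I_n)
    : nat :=
  (`[< covered x y ord i (x i - 1/2, y i - 1/2) >] : nat)
  + (`[< covered x y ord i (x i + 1/2, y i - 1/2) >] : nat)
  + (`[< covered x y ord i (x i - 1/2, y i + 1/2) >] : nat)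
  + (`[< covered x y ord i (x i + 1/2, y i + 1/2) >] : nat).

Definition bad (x y : 'I_n -> R) (ord : {perm 'I_n}) (i : 'I_n) : Prop :=
  (2 <= covered_corners x y ord i)%N.

Definition standard_bad (x y : 'I_n -> R) (ord : {perm 'I_n}) (i : 'I_n)
    : Prop :=
  bad x y ord i /\
  ((forall t, y i - 1/2 <= t <= y i + 1/2 ->
       covered x y ord i (x i - 1/2, t)) \/
   (forall t, y i - 1/2 <= t <= y i + 1/2 ->
       covered x y ord i (x i + 1/2, t))).

End Layouts.

(* Every bad square has a standard bad square among itself and its two vertical
   neighbours; as an index has at most three neighbours, the bound follows by
   counting. Since w <= 2, any two squares overlap horizontally, so the squares
   covering a corner of s_i, or lying directly above or below it, are tightly
   constrained. A case analysis on the covered corners, the depth order and the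
   horizontal offsets then shows that either a vertical side of the relevant
   square is entirely covered, or the visible parts of its four sides fit in
   intervals of total length at most 2 + 1/k, contradicting 1/k-reasonableness.
   Reflections in the coordinate axes reduce the four corners to one. *)

From HB Require Import structures.
From mathcomp Require Import all_boot all_order all_algebra perm.
From mathcomp Require Import all_classical all_reals.
From mathcomp Require Import unstable ereal measure lebesgue_measure.
From mathcomp Require Import lebesgue_stieltjes_measure measure_extension ring lra zify.
Set Implicit Arguments. Unset Strict Implicit. Unset Printing Implicit Defensive.
Import Order.TTheory GRing.Theory Num.Theory.
Local Open Scope ring_scope.

Section UnitSquares.
Variable R : realType.
Implicit Types (c p : R * R) (C : R * R -> Prop) (S : R -> Prop).

Definition box c p : Prop := `|p.1 - c.1| <= 1/2 /\ `|p.2 - c.2| <= 1/2.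

Lemma boxP c p : box c p <->
  (c.1 - 1/2 <= p.1 /\ p.1 <= c.1 + 1/2) /\ (c.2 - 1/2 <= p.2 /\ p.2 <= c.2 + 1/2).
Proof. by rewrite /box !ler_distl; split=> -[/andP ? /andP ?]. Qed.

Definition covered_outside S (m u v : R) : Prop :=
  forall t, m - 1/2 <= t -> t <= m + 1/2 -> t < u \/ v < t -> S t.

Lemma covered_outside_whole S m : covered_outside S m (m - 1/2) (m + 1/2).
Proof. by move=> t t1 t2 [] ?; exfalso; lra. Qed.

Lemma covered_below S m u :
  (forall t, m - 1/2 <= t -> t < u -> S t) -> covered_outside S m u (m + 1/2).
Proof. by move=> cov t t1 t2 [tu|?]; [exact: cov | exfalso; lra]. Qed.

Lemma covered_above S m v :
  (forall t, v < t -> t <= m + 1/2 -> S t) -> covered_outside S m (m - 1/2) v.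
Proof. by move=> cov t t1 t2 [?|vt]; [exfalso; lra | exact: cov]. Qed.

Lemma covered_outsideN S m u v :
  covered_outside (fun t => S (- t)) (- m) u v -> covered_outside S m (- v) (- u).
Proof. by move=> cov t t1 t2 tuv; rewrite -[t]opprK; apply: cov; lra. Qed.

(* A measure-free form of "the visible perimeter of the square centred at [c]
   exceeds [r]", where [C] holds at the covered points: intervals containing the
   visible parts of the four sides always have total length above [r]. *)
Definition perimeter_gt (r : R) C c : Prop :=
  forall u1 v1 u2 v2 u3 v3 u4 v4 : R,
  u1 <= v1 -> u2 <= v2 -> u3 <= v3 -> u4 <= v4 ->
  covered_outside (fun t => C (t, c.2 - 1/2)) c.1 u1 v1 ->
  covered_outside (fun t => C (t, c.2 + 1/2)) c.1 u2 v2 ->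
  covered_outside (fun t => C (c.1 - 1/2, t)) c.2 u3 v3 ->
  covered_outside (fun t => C (c.1 + 1/2, t)) c.2 u4 v4 ->
  r < (v1 - u1) + (v2 - u2) + (v3 - u3) + (v4 - u4).

Lemma not_perimeter_gt r C c u1 v1 u2 v2 u3 v3 u4 v4 :
  u1 <= v1 -> u2 <= v2 -> u3 <= v3 -> u4 <= v4 ->
  covered_outside (fun t => C (t, c.2 - 1/2)) c.1 u1 v1 ->
  covered_outside (fun t => C (t, c.2 + 1/2)) c.1 u2 v2 ->
  covered_outside (fun t => C (c.1 - 1/2, t)) c.2 u3 v3 ->
  covered_outside (fun t => C (c.1 + 1/2, t)) c.2 u4 v4 ->
  (v1 - u1) + (v2 - u2) + (v3 - u3) + (v4 - u4) <= r -> ~ perimeter_gt r C c.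
Proof.
by move=> l1 l2 l3 l4 c1 c2 c3 c4 le /(_ _ _ _ _ _ _ _ _ l1 l2 l3 l4 c1 c2 c3 c4); lra.
Qed.

Definition vertical_side_covered C c : Prop :=
  (forall t : R, c.2 - 1/2 <= t <= c.2 + 1/2 -> C (c.1 - 1/2, t)) \/
  (forall t : R, c.2 - 1/2 <= t <= c.2 + 1/2 -> C (c.1 + 1/2, t)).

Definition reflx p : R * R := (- p.1, p.2).
Definition refly p : R * R := (p.1, - p.2).

Lemma box_reflx c p : box (reflx c) p <-> box c (reflx p).
Proof. by split=> /boxP /= ?; apply/boxP => /=; lra. Qed.

Lemma box_refly c p : box (refly c) p <-> box c (refly p).
Proof. by split=> /boxP /= ?; apply/boxP => /=; lra. Qed.

Lemma perimeter_gt_reflx r C c :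
  perimeter_gt r C c -> perimeter_gt r (C \o reflx) (reflx c).
Proof.
move=> gt u1 v1 u2 v2 u3 v3 u4 v4 l1 l2 l3 l4 /= c1 c2 c3 c4.
have -> : (v1 - u1) + (v2 - u2) + (v3 - u3) + (v4 - u4) =
  (- u1 - - v1) + (- u2 - - v2) + (v4 - u4) + (v3 - u3) by ring.
apply: gt; rewrite ?lerN2 //; try exact: covered_outsideN.
- by rewrite (_ : c.1 - 1/2 = - (- c.1 + 1/2)); last ring.
- by rewrite (_ : c.1 + 1/2 = - (- c.1 - 1/2)); last ring.
Qed.

Lemma perimeter_gt_refly r C c :
  perimeter_gt r C c -> perimeter_gt r (C \o refly) (refly c).
Proof.
move=> gt u1 v1 u2 v2 u3 v3 u4 v4 l1 l2 l3 l4 /= c1 c2 c3 c4.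
have -> : (v1 - u1) + (v2 - u2) + (v3 - u3) + (v4 - u4) =
  (v2 - u2) + (v1 - u1) + (- u3 - - v3) + (- u4 - - v4) by ring.
apply: gt; rewrite ?lerN2 //; try exact: covered_outsideN.
- by rewrite (_ : c.2 - 1/2 = - (- c.2 + 1/2)); last ring.
- by rewrite (_ : c.2 + 1/2 = - (- c.2 - 1/2)); last ring.
Qed.

Lemma vertical_side_covered_reflx C c :
  vertical_side_covered (C \o reflx) (reflx c) -> vertical_side_covered C c.
Proof.
case=> cov; [right | left] => t /cov /=.
  by rewrite (_ : c.1 + 1/2 = - (- c.1 - 1/2)) //; ring.
by rewrite (_ : c.1 - 1/2 = - (- c.1 + 1/2)) //; ring.
Qed.

Lemma vertical_side_covered_refly C c :
  vertical_side_covered (C \o refly) (refly c) -> vertical_side_covered C c.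
Proof.
case=> cov; [left | right] => t /andP[t1 t2];
  have := cov (- t); rewrite /comp /refly /= opprK; apply; apply/andP; split; lra.
Qed.

End UnitSquares.

Arguments not_perimeter_gt {R r C c}.

(* [cI] is the centre of a square, [cP] and [cQ] those of its neighbours below
   and above, [cL], [cL1], [cL2] those of squares covering its corners; [C] holds
   at the points covered by the squares in front of the square whose perimeter
   is examined. *)
Section SquaresInFront.
Variables (R : realType) (e : R).
Implicit Types (C : R * R -> Prop).

Local Ltac inside cov := apply: cov; apply/boxP => /=; lra.

Lemma vertical_side_covered_below_left C (cP cI cL : R * R) : 0 <= e ->
  `|cI.1 - cP.1| <= 1 -> `|cL.1 - cP.1| <= 1 -> cI.2 = cP.2 + e -> cL.2 <= cP.2 ->
  box cL (cI.1 - 1/2, cI.2 - 1/2) ->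
  (forall p, box cI p -> C p) -> (forall p, box cL p -> C p) ->
  perimeter_gt (2 + e) C cP -> vertical_side_covered C cP.
Proof.
rewrite !ler_distl => ? /andP[? ?] /andP[? ?] ? ? /boxP /= ? CI CL gt.
have [?|?] := lerP cI.1 cP.1.
  left=> t /andP[? ?].
  by have [?|?] := lerP (cI.2 - 1/2) t; [inside CI | inside CL].
have [?|?] := lerP cL.1 cP.1; last first.
  right=> t /andP[? ?].
  by have [?|?] := lerP (cI.2 - 1/2) t; [inside CI | inside CL].
exfalso; move: gt; apply: (not_perimeter_gt (cL.1 + 1/2) (cP.1 + 1/2)
  (cP.1 - 1/2) (cI.1 - 1/2) (cL.2 + 1/2) (cP.2 + 1/2) (cP.2 - 1/2) (cI.2 - 1/2));
  [lra | lra | lra | lra | | | | | lra].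
- by apply: covered_below => t *; inside CL.
- by apply: covered_above => t *; inside CI.
- by apply: covered_below => t *; inside CL.
- by apply: covered_above => t *; inside CI.
Qed.

Lemma vertical_side_covered_below C (cP cI cL : R * R) : 0 <= e ->
  `|cI.1 - cP.1| <= 1 -> `|cL.1 - cP.1| <= 1 -> cI.2 = cP.2 + e -> cL.2 <= cP.2 ->
  box cL (cI.1 - 1/2, cI.2 - 1/2) \/ box cL (cI.1 + 1/2, cI.2 - 1/2) ->
  (forall p, box cI p -> C p) -> (forall p, box cL p -> C p) ->
  perimeter_gt (2 + e) C cP -> vertical_side_covered C cP.
Proof.
move=> e0 dI dL yI yL [corner|corner] CI CL gt.
  exact: (vertical_side_covered_below_left e0 dI dL yI yL corner CI CL gt).
apply: vertical_side_covered_reflx.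
apply: (vertical_side_covered_below_left (cI := reflx cI) (cL := reflx cL) e0)
  (perimeter_gt_reflx gt) => //=; [by rewrite -opprD normrN | by rewrite -opprD normrN | | |].
- by move/boxP: corner => /= ?; apply/boxP => /=; lra.
- by move=> p /box_reflx /CI.
- by move=> p /box_reflx /CL.
Qed.

Lemma vertical_side_covered_above C (cP cI cL : R * R) : 0 <= e ->
  `|cI.1 - cP.1| <= 1 -> `|cL.1 - cP.1| <= 1 -> cI.2 = cP.2 - e -> cP.2 <= cL.2 ->
  box cL (cI.1 - 1/2, cI.2 + 1/2) \/ box cL (cI.1 + 1/2, cI.2 + 1/2) ->
  (forall p, box cI p -> C p) -> (forall p, box cL p -> C p) ->
  perimeter_gt (2 + e) C cP -> vertical_side_covered C cP.
Proof.
move=> e0 dI dL yI yL corner CI CL gt; apply: vertical_side_covered_refly.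
apply: (vertical_side_covered_below (cP := refly cP) (cI := refly cI) (cL := refly cL)
  e0 dI dL) (perimeter_gt_refly gt) => /=; [lra | lra | | |].
- by case: corner => /boxP /= ?; [left | right]; apply/boxP => /=; lra.
- by move=> p /box_refly /CI.
- by move=> p /box_refly /CL.
Qed.

Lemma top_corners_not_perimeter_gt C (cI cQ cL1 cL2 : R * R) : 0 <= e ->
  cQ.2 = cI.2 + e -> `|cQ.1 - cI.1| <= 1 -> `|cL2.1 - cL1.1| <= 1 ->
  box cL1 (cI.1 - 1/2, cI.2 + 1/2) -> box cL2 (cI.1 + 1/2, cI.2 + 1/2) ->
  (forall p, box cQ p -> C p) -> (forall p, box cL1 p -> C p) ->
  (forall p, box cL2 p -> C p) -> ~ perimeter_gt (2 + e) C cI.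
Proof.
rewrite !ler_distl => ? ? /andP[? ?] /andP[? ?] /boxP /= ? /boxP /= ? CQ CL1 CL2.
have top : covered_outside (fun t => C (t, cI.2 + 1/2)) cI.1 (cL1.1 + 1/2) (cL1.1 + 1/2).
  by move=> t ? ? [?|?]; [inside CL1 | inside CL2].
have [?|?] := lerP cQ.1 cI.1.
  apply: (not_perimeter_gt (cI.1 - 1/2) (cI.1 + 1/2) (cL1.1 + 1/2) (cL1.1 + 1/2)
    (cI.2 - 1/2) (cQ.2 - 1/2) (cI.2 - 1/2) (cI.2 + 1/2));
    [lra | lra | lra | lra | exact: covered_outside_whole | exact: top | |
     exact: covered_outside_whole | lra].
  by apply: covered_above => t *; inside CQ.
apply: (not_perimeter_gt (cI.1 - 1/2) (cI.1 + 1/2) (cL1.1 + 1/2) (cL1.1 + 1/2)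
  (cI.2 - 1/2) (cI.2 + 1/2) (cI.2 - 1/2) (cQ.2 - 1/2));
  [lra | lra | lra | lra | exact: covered_outside_whole | exact: top |
   exact: covered_outside_whole | | lra].
by apply: covered_above => t *; inside CQ.
Qed.

Lemma bottom_corners_not_perimeter_gt C (cI cP cL1 cL2 : R * R) : 0 <= e ->
  cP.2 = cI.2 - e -> `|cP.1 - cI.1| <= 1 -> `|cL2.1 - cL1.1| <= 1 ->
  box cL1 (cI.1 - 1/2, cI.2 - 1/2) -> box cL2 (cI.1 + 1/2, cI.2 - 1/2) ->
  (forall p, box cP p -> C p) -> (forall p, box cL1 p -> C p) ->
  (forall p, box cL2 p -> C p) -> ~ perimeter_gt (2 + e) C cI.
Proof.
move=> e0 yP dP dL corner1 corner2 CP CL1 CL2 /perimeter_gt_refly.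
apply: (top_corners_not_perimeter_gt (cQ := refly cP) (cL1 := refly cL1)
  (cL2 := refly cL2) e0) => /=; [lra | by [] | by [] | | | | |].
- by move/boxP: corner1 => /= ?; apply/boxP => /=; lra.
- by move/boxP: corner2 => /= ?; apply/boxP => /=; lra.
- by move=> p /box_refly /CP.
- by move=> p /box_refly /CL1.
- by move=> p /box_refly /CL2.
Qed.

Lemma vertical_side_covered_between C (cI cP cQ : R * R) : 0 <= e -> e <= 1/2 ->
  cP.2 = cI.2 - e -> cQ.2 = cI.2 + e ->
  `|cP.1 - cI.1| <= 1 -> `|cQ.1 - cI.1| <= 1 -> `|cQ.1 - cP.1| <= 1 ->
  (forall p, box cP p -> C p) -> (forall p, box cQ p -> C p) ->
  perimeter_gt (2 + e) C cI -> vertical_side_covered C cI.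
Proof.
rewrite !ler_distl => ? ? ? ? /andP[? ?] /andP[? ?] /andP[? ?] CP CQ gt.
have [?|?] := lerP cQ.1 cI.1; have [?|?] := lerP cP.1 cI.1.
- left=> t /andP[? ?].
  by have [?|?] := lerP (cQ.2 - 1/2) t; [inside CQ | inside CP].
- exfalso; move: gt; apply: (not_perimeter_gt (cI.1 - 1/2) (cP.1 - 1/2)
    (cQ.1 + 1/2) (cI.1 + 1/2) (cI.2 - 1/2) (cQ.2 - 1/2) (cP.2 + 1/2) (cI.2 + 1/2));
    [lra | lra | lra | lra | | | | | lra].
  + by apply: covered_above => t *; inside CP.
  + by apply: covered_below => t *; inside CQ.
  + by apply: covered_above => t *; inside CQ.
  + by apply: covered_below => t *; inside CP.
- exfalso; move: gt; apply: (not_perimeter_gt (cP.1 + 1/2) (cI.1 + 1/2)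
    (cI.1 - 1/2) (cQ.1 - 1/2) (cP.2 + 1/2) (cI.2 + 1/2) (cI.2 - 1/2) (cQ.2 - 1/2));
    [lra | lra | lra | lra | | | | | lra].
  + by apply: covered_below => t *; inside CP.
  + by apply: covered_above => t *; inside CQ.
  + by apply: covered_below => t *; inside CP.
  + by apply: covered_above => t *; inside CQ.
- right=> t /andP[? ?].
  by have [?|?] := lerP (cQ.2 - 1/2) t; [inside CQ | inside CP].
Qed.

End SquaresInFront.

Lemma le_lebesgue_measure_itv (R : realType) (A : set R) (u v : R) :
  u <= v -> (A `<=` `[u, v])%classic -> (lebesgue_measure A <= (v - u)%:E)%E.
Proof.
move=> uv sA; apply: (@le_trans _ _ (lebesgue_measure `[u, v]%classic)).
  rewrite /lebesgue_measure /lebesgue_stieltjes_measure /measure_extension.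
  exact: le_mu_ext.
by rewrite lebesgue_measure_itv /= lte_fin; case: ifP => _ //; rewrite lee_fin subr_ge0.
Qed.

Lemma neq_perm_ltn (n : nat) (s : {perm 'I_n}) (i j : 'I_n) :
  (i != j) = (s i < s j)%N || (s j < s i)%N.
Proof. by rewrite -neq_ltn val_eqE (inj_eq perm_inj). Qed.

Section Layout.
Variables (R : realType) (n : nat) (x y : 'I_n -> R) (ord : {perm 'I_n}).
Implicit Types (i j : 'I_n) (p : R * R).

Lemma coveredP i p :
  covered x y ord i p <-> exists2 j, (ord i < ord j)%N & box (x j, y j) p.
Proof.
split=> [cov | [j ij bj] vis].
  apply: contrapT => nj; apply: cov => j ji bj.
  by move: ji; rewrite (neq_perm_ltn ord) => /orP[// | ij]; case: nj; exists j.
have ji : j != i by apply: contraTneq ij => ->; rewrite ltnn.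
by have := vis j ji bj; rewrite ltnNge (ltnW ij).
Qed.

Lemma covered_in_front i j :
  (ord i < ord j)%N -> forall p, box (x j, y j) p -> covered x y ord i p.
Proof. by move=> ij p bj; apply/coveredP; exists j. Qed.

Lemma visible_part_subset i (m u v : R) (side : R -> R * R) :
  covered_outside (fun t => covered x y ord i (side t)) m u v ->
  (visible_part x y ord i m side `<=` `[u, v])%classic.
Proof.
move=> cov t [/andP[t1 t2] vis]; rewrite /= in_itv /=.
by apply/andP; split; rewrite leNgt; apply/negP => tuv; apply: (cov t t1 t2) vis;
  [left | right].
Qed.

Lemma perimeter_gt_reasonable e i :
  reasonable e x y ord -> perimeter_gt (2 + e) (covered x y ord i) (x i, y i).
Proof.
move=> reas u1 v1 u2 v2 u3 v3 u4 v4 l1 l2 l3 l4 c1 c2 c3 c4.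
have := reas i; rewrite /gap /visible_perimeter => gap_gt.
have := leeB (leeD (leeD (leeD
  (le_lebesgue_measure_itv l1 (visible_part_subset c1))
  (le_lebesgue_measure_itv l2 (visible_part_subset c2)))
  (le_lebesgue_measure_itv l3 (visible_part_subset c3)))
  (le_lebesgue_measure_itv l4 (visible_part_subset c4))) (lexx (2%:E : \bar R)).
rewrite -!EFinD => le; have := lt_le_trans gap_gt le; rewrite lte_fin; lra.
Qed.

Lemma standard_bad_vertical_side i :
  vertical_side_covered (covered x y ord i) (x i, y i) -> standard_bad x y ord i.
Proof.
have lo : y i - 1/2 <= y i - 1/2 <= y i + 1/2 by apply/andP; split; lra.
have hi : y i - 1/2 <= y i + 1/2 <= y i + 1/2 by apply/andP; split; lra.
rewrite /standard_bad /bad /covered_corners.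
by case=> side; split; [| left | | right] => //;
  rewrite (asboolT (side _ lo)) (asboolT (side _ hi)); case: asboolP; case: asboolP.
Qed.

Lemma bad_corners i : bad x y ord i ->
  covered x y ord i (x i - 1/2, y i + 1/2) /\ covered x y ord i (x i + 1/2, y i + 1/2) \/
  covered x y ord i (x i - 1/2, y i - 1/2) /\ covered x y ord i (x i + 1/2, y i - 1/2) \/
  (covered x y ord i (x i - 1/2, y i + 1/2) \/ covered x y ord i (x i + 1/2, y i + 1/2)) /\
  (covered x y ord i (x i - 1/2, y i - 1/2) \/ covered x y ord i (x i + 1/2, y i - 1/2)).
Proof.
rewrite /bad /covered_corners.
by do 4 case: asboolP => ? //=; tauto.
Qed.

End Layout.

Section UniformLayout.
Variables (R : realType) (n : nat) (x y : 'I_n -> R) (ord : {perm 'I_n}) (e : R).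
Hypothesis e_ge0 : (0 : R) <= e.
Hypothesis x_close : forall i j, `|x i - x j| <= 1.
Hypothesis y_incr : forall i j : 'I_n, (i < j)%N -> y i < y j.
Hypothesis y_step : forall i j : 'I_n, (j : nat) = i.+1 -> y j - y i = e.
Hypothesis reas : reasonable e x y ord.
Implicit Types (i j : 'I_n).

Lemma y_le_of_leq i j : (i <= j)%N -> y i <= y j.
Proof. by rewrite leq_eqVlt => /orP[/eqP/val_inj -> // | /y_incr/ltW]. Qed.

Lemma ltn_of_y_le i j : y i <= y j -> i != j -> (i < j)%N.
Proof.
move=> yij ij; rewrite ltn_neqAle val_eqE ij leqNgt /=.
by apply/negP => /y_incr; rewrite ltNge yij.
Qed.

Lemma exists_succ i l : y i <= y l -> i != l -> exists q : 'I_n, (q : nat) = i.+1.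
Proof.
move=> yil il; have lt := ltn_of_y_le yil il.
by exists (Ordinal (leq_ltn_trans lt (ltn_ord l))).
Qed.

Lemma exists_pred i l : y l <= y i -> l != i -> exists p : 'I_n, (p : nat).+1 = i.
Proof.
move=> yli li; have lt := ltn_of_y_le yli li.
have lt_n : ((val i).-1 < n)%N by exact: leq_ltn_trans (leq_pred _) (ltn_ord i).
by exists (Ordinal lt_n) => /=; lia.
Qed.

Lemma y_adjacent i j : (i <= j.+1 <= i.+2)%N -> y i - e <= y j <= y i + e.
Proof.
move=> /andP[? ?]; have := e_ge0.
have [/y_step|[/val_inj ->|/y_step]] :
  (i : nat) = j.+1 \/ (i : nat) = j \/ (j : nat) = i.+1 by lia.
all: by move=> *; apply/andP; split; lra.
Qed.

Lemma covered_top_corner_succ i :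
  covered x y ord i (x i - 1/2, y i + 1/2) \/ covered x y ord i (x i + 1/2, y i + 1/2) ->
  exists2 q : 'I_n, (q : nat) = i.+1 & standard_bad x y ord q \/ (ord i < ord q)%N.
Proof.
move=> corner_covered.
have [l il corner] : exists2 l, (ord i < ord l)%N &
    box (x l, y l) (x i - 1/2, y i + 1/2) \/ box (x l, y l) (x i + 1/2, y i + 1/2).
  by case: corner_covered => /coveredP[l il bl]; exists l => //; [left | right].
have yil : y i <= y l by case: corner => /boxP /= ?; lra.
have ilN : i != l by rewrite (neq_perm_ltn ord) il.
have [q qi] := exists_succ yil ilN; exists q => //.
have qiN : q != i by apply/eqP => qiE; move: qi; rewrite qiE => /n_Sn.
move: qiN; rewrite (neq_perm_ltn ord) => /orP[qi_lt | ?]; [left | by right].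
have := y_step qi => yq.
apply: standard_bad_vertical_side.
apply: (vertical_side_covered_above (cP := (x q, y q)) (cI := (x i, y i)) (cL := (x l, y l))
  e_ge0 (x_close i q) (x_close l q)) => /=; first lra.
- by apply: y_le_of_leq; rewrite qi; exact: ltn_of_y_le.
- exact: corner.
- exact: covered_in_front.
- by apply: covered_in_front; apply: ltn_trans il.
- exact: perimeter_gt_reasonable.
Qed.

Lemma covered_bottom_corner_pred i :
  covered x y ord i (x i - 1/2, y i - 1/2) \/ covered x y ord i (x i + 1/2, y i - 1/2) ->
  exists2 p : 'I_n, (p : nat).+1 = i & standard_bad x y ord p \/ (ord i < ord p)%N.
Proof.
move=> corner_covered.
have [l il corner] : exists2 l, (ord i < ord l)%N &
    box (x l, y l) (x i - 1/2, y i - 1/2) \/ box (x l, y l) (x i + 1/2, y i - 1/2).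
  by case: corner_covered => /coveredP[l il bl]; exists l => //; [left | right].
have yli : y l <= y i by case: corner => /boxP /= ?; lra.
have liN : l != i by rewrite (neq_perm_ltn ord) il orbT.
have [p pi] := exists_pred yli liN; exists p => //.
have piN : p != i by apply/eqP => piE; move: pi; rewrite piE => /esym/n_Sn.
move: piN; rewrite (neq_perm_ltn ord) => /orP[pi_lt | ?]; [left | by right].
have := y_step (esym pi) => yi.
apply: standard_bad_vertical_side.
apply: (vertical_side_covered_below (cP := (x p, y p)) (cI := (x i, y i)) (cL := (x l, y l))
  e_ge0 (x_close i p) (x_close l p)) => /=; first lra.
- by apply: y_le_of_leq; rewrite -ltnS pi; exact: ltn_of_y_le.
- exact: corner.
- exact: covered_in_front.
- by apply: covered_in_front; apply: ltn_trans il.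
- exact: perimeter_gt_reasonable.
Qed.

Hypothesis e_le_half : e <= 1/2.

Lemma bad_adjacent_standard_bad i : bad x y ord i ->
  exists2 j, standard_bad x y ord j & (i <= j.+1 <= i.+2)%N.
Proof.
case/bad_corners => [[tl tr] | [[bl br] | [top bottom]]].
- have [q qi [|iq]] := covered_top_corner_succ (or_introl tl); first by exists q => //; lia.
  exfalso; move/coveredP: tl => [l1 il1 b1]; move/coveredP: tr => [l2 il2 b2].
  have := y_step qi => yq.
  apply: (top_corners_not_perimeter_gt (cI := (x i, y i)) (cQ := (x q, y q))
    (cL1 := (x l1, y l1)) (cL2 := (x l2, y l2)) e_ge0 _ (x_close q i) (x_close l2 l1)
    b1 b2 (covered_in_front iq) (covered_in_front il1) (covered_in_front il2)
    (perimeter_gt_reasonable reas)) => /=; lra.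
- have [p pi [|ip]] := covered_bottom_corner_pred (or_introl bl); first by exists p => //; lia.
  exfalso; move/coveredP: bl => [l1 il1 b1]; move/coveredP: br => [l2 il2 b2].
  have := y_step (esym pi) => yi.
  apply: (bottom_corners_not_perimeter_gt (cI := (x i, y i)) (cP := (x p, y p))
    (cL1 := (x l1, y l1)) (cL2 := (x l2, y l2)) e_ge0 _ (x_close p i) (x_close l2 l1)
    b1 b2 (covered_in_front ip) (covered_in_front il1) (covered_in_front il2)
    (perimeter_gt_reasonable reas)) => /=; lra.
- have [q qi [|iq]] := covered_top_corner_succ top; first by exists q => //; lia.
  have [p pi [|ip]] := covered_bottom_corner_pred bottom; first by exists p => //; lia.
  exists i; last lia.
  have := y_step qi; have := y_step (esym pi) => yi yq.
  apply: standard_bad_vertical_side.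
  apply: (vertical_side_covered_between (cI := (x i, y i)) (cP := (x p, y p))
    (cQ := (x q, y q)) e_ge0 e_le_half _ _ (x_close p i) (x_close q i) (x_close q p)
    (covered_in_front ip) (covered_in_front iq) (perimeter_gt_reasonable reas)) => /=; lra.
Qed.

End UniformLayout.

Lemma card_le_3_mul_adjacent (n : nat) (A B : {set 'I_n}) :
  (forall i, i \in A -> exists2 j, j \in B & (i <= j.+1 <= i.+2)%N) ->
  (#|A| <= 3 * #|B|)%N.
Proof.
move=> near.
pose N (j : 'I_n) := [set i : 'I_n | (i <= j.+1 <= i.+2)%N].
have sub : A \subset (\bigcup_(j in B) N j)%SET.
  by apply/fintype.subsetP => i /near[j jB ij]; apply/bigcupP; exists j; rewrite // inE.
have cardN j : (#|N j| <= 3)%N.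
  rewrite cardE -(size_map (@nat_of_ord n) (enum (N j))) -(size_iota j.-1 3).
  apply: uniq_leq_size; first by rewrite (map_inj_uniq (@ord_inj n)) enum_uniq.
  move=> v /mapP[i]; rewrite mem_enum inE => /andP[? ?] ->.
  by rewrite mem_iota; apply/andP; split; lia.
rewrite (leq_trans (subset_leq_card sub)) // (leq_trans (card_big_setU _ _ _)) //.
by rewrite mulnC -sum_nat_const leq_sum.
Qed.

Theorem corollary13 (R : realType) (w h : R) (k n : nat)
  (y : 'I_n -> R) (x : 'I_n -> R) (ord : {perm 'I_n}) (a b : R) :
  1 < w -> w <= 2 -> 1 < h -> (2 <= k)%N ->
  (forall i : 'I_n, 1/2 <= y i <= h - 1/2) ->
  (forall i j : 'I_n, (i < j)%N -> y i < y j) ->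
  (forall i j : 'I_n, nat_of_ord j = (nat_of_ord i).+1 ->
      y j - y i = 1 / k%:R) ->
  (forall i : 'I_n, 1/2 <= x i <= w - 1/2) ->
  reasonable (1 / k%:R) x y ord ->
  1/2 <= a -> a <= b -> b <= h - 1/2 ->
  (#|[set i : 'I_n | `[< bad x y ord i >] && (a <= y i <= b)%R]|
   <= 3 * #|[set i : 'I_n | `[< standard_bad x y ord i >] &&
                  (a - 1 / k%:R <= y i <= b + 1 / k%:R)%R]|)%N.
Proof.
move=> _ w_le2 _ k_ge2 _ y_incr y_step x_bnd reas _ _ _.
set e := 1 / k%:R in y_step reas *.
have k_ge2R : (2 : R) <= k%:R by rewrite (ler_nat R 2 k).
have e_ge0 : 0 <= e by rewrite /e divr_ge0 ?ler0n.
have e_le_half : e <= 1/2 by rewrite /e ler_pdivrMr; lra.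
have x_close i j : `|x i - x j| <= 1.
  move: (x_bnd i) (x_bnd j) => /andP[? ?] /andP[? ?].
  by rewrite ler_distl; apply/andP; split; lra.
apply: card_le_3_mul_adjacent => i; rewrite inE => /andP[/asboolP bad_i /andP[? ?]].
have [j sb_j ij] := bad_adjacent_standard_bad e_ge0 x_close y_incr y_step reas e_le_half bad_i.
exists j => //; rewrite inE (asboolT sb_j) /=.
by have /andP[? ?] := y_adjacent e_ge0 y_step ij; apply/andP; split; lra.
Qed.
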